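(* Every search game (as defined in the context) admits a pure (Bayesian) Nash equilibrium.
   Context: A search game $G=(N,\Omega,\Pi,\mu,K,c,v)$ consists of: a finite set of players $N=\{1,\ldots,n\}$; a finite set $\Omega$ of locations; for each player $i$ a partition $\Pi_i$ of $\Omega$, with $\pi_i(\omega)$ the cell containing $\omega$; a common prior $\mu\in\Delta(\Omega)$ with $\mu(\pi_i)>0$ for every cell of every player; capacities $K_i\in\mathbb{N}$; costs $c_i:\{0,\ldots,K_i\}\to\mathbb{R}_{\ge0}$ with $c_i(0)=0$ and nondecreasing increments $c_i(k+1)-c_i(k)\ge c_i(k)-c_i(k-1)$; rewards $v_i^m(\omega)\ge0$ weakly decreasing in $m$; social values $v_{\mathfrak{s}}(\omega)\ge0$. A pure strategy $s_i$ assigns to each cell $\pi_i$ a subset $s_i(\pi_i)\subseteq\pi_i$ of size at most $K_i$. With $m_s(\omega)=\sum_{i}\mathbf{1}_{\omega\in s_i(\pi_i(\omega))}$, player $i$'s payoff is $u_i(s)=\sum_{\omega}\mu(\omega)\big[\mathbf{1}_{\omega\in s_i(\pi_i(\omega))}v_i^{m_s(\omega)}(\omega)-c_i(|s_i(\pi_i(\omega))|)\big]$. A pure Nash equilibrium is a pure profile $s$ with $u_i(s)\ge u_i(s_i',s_{-i})$ for all $i$ and all pure $s_i'$. *)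

From HB Require Import structures.
From mathcomp Require Import all_boot all_order all_algebra.
Set Implicit Arguments. Unset Strict Implicit. Unset Printing Implicit Defensive.
Import Order.TTheory GRing.Theory Num.Theory.
Local Open Scope ring_scope.

Section SearchGame.
Variables (R : realFieldType) (n : nat) (Omega : finType).

(* A (pure) strategy profile: for each player i and each cell C of Pi_i,
   the chosen subset s i C of C.  Values on non-cells are irrelevant. *)
Definition profile := 'I_n -> {set Omega} -> {set Omega}.

Definition cell (P : 'I_n -> {set {set Omega}}) (i : 'I_n) (w : Omega) :=
  pblock (P i) w.

Definition admissible (P : 'I_n -> {set {set Omega}}) (K : 'I_n -> nat)
  (i : 'I_n) (si : {set Omega} -> {set Omega}) : Prop :=
  forall C, C \in P i -> (si C \subset C) /\ (#|si C| <= K i)%N.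

Definition admissible_profile P K (s : profile) : Prop :=
  forall i, admissible P K i (s i).

Definition nsearch (P : 'I_n -> {set {set Omega}}) (s : profile) (w : Omega) : nat :=
  (\sum_(j < n) (w \in s j (cell P j w)))%N.

Definition payoff (P : 'I_n -> {set {set Omega}}) (mu : Omega -> R)
  (c : 'I_n -> nat -> R) (v : 'I_n -> nat -> Omega -> R)
  (s : profile) (i : 'I_n) : R :=
  \sum_(w : Omega) mu w *
    ((w \in s i (cell P i w))%:R * v i (nsearch P s w) w
     - c i #|s i (cell P i w)|).

Definition deviate (s : profile) (i : 'I_n) (si : {set Omega} -> {set Omega})
  : profile := fun j => if j == i then si else s j.

Definition pure_NE P K mu c v (s : profile) : Prop :=
  admissible_profile P K s /\
  forall i si, admissible P K i si ->
    payoff P mu c v (deviate s i si) i <= payoff P mu c v s i.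

End SearchGame.

(* Every pair (player i, cell C of Pi_i) is treated as a separate agent choosing a
   subset of C: a player's payoff is the sum over its cells, so a profile is a Nash
   equilibrium iff each agent plays a best response.  The agents play a
   player-specific congestion game: each picks at most K_i locations, pays a convex
   price for their number and values each location by a nonincreasing function of
   its load.  Such a game has a pure equilibrium, by induction on the total
   capacity.  Raising one agent's capacity by one adds at most one location to its
   best response.  Freezing the loads [L] of the previous equilibrium, every agent
   stays optimal against [L], and at most one location [x] carries one searcher
   more than [L].  Agents not searching [x] still best-respond to the actual loads;
   one that does not either drops [x], which yields an equilibrium, or trades it
   for a location [y] it values more, which becomes the new overloaded location
   while the potential sum_a sum_(w in s a) f_a(w, L w + 1) strictly increases. *)

From HB Require Import structures.
From mathcomp Require Import all_boot all_order all_algebra.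
From mathcomp Require Import zify lra.
From Stdlib Require Import Classical.
Import Order.TTheory GRing.Theory Num.Theory.
Local Open Scope ring_scope.
Set Implicit Arguments. Unset Strict Implicit.

Section BestSet.
Variables (R : realFieldType) (W : finType).
Implicit Types (phi psi : W -> R) (h : nat -> R) (D S T U : {set W}).

Definition gain phi h S := \sum_(w in S) phi w - h #|S|.

Definition best_set D k phi h S :=
  [/\ S \subset D, (#|S| <= k)%N &
    forall T, T \subset D -> (#|T| <= k)%N -> gain phi h T <= gain phi h S].

Lemma eq_in_gain phi psi h S : {in S, phi =1 psi} -> gain phi h S = gain psi h S.
Proof. by move=> eq_phi; rewrite /gain (eq_bigr _ eq_phi). Qed.

Lemma gain_setU1 phi h S y : y \notin S ->
  gain phi h (y |: S) = gain phi h S + phi y - (h #|S|.+1 - h #|S|).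
Proof. by move=> yS; rewrite /gain (big_setU1 _ yS) cardsU1 yS /=; lra. Qed.

Lemma gain_setD1 phi h S x : x \in S ->
  gain phi h S = gain phi h (S :\ x) + phi x - (h #|S :\ x|.+1 - h #|S :\ x|).
Proof. by move=> xS; rewrite -gain_setU1 ?setD11 ?setD1K. Qed.

Lemma best_set_exists D k phi h : exists S, best_set D k phi h S.
Proof.
pose ok T := (T \subset D) && (#|T| <= k)%N.
have ok0 : ok set0 by rewrite /ok sub0set cards0.
case: (arg_maxP (gain phi h) ok0) => S /andP[sSD cS] S_max.
by exists S; split=> // T sTD cT; apply: S_max; rewrite /ok sTD.
Qed.

Lemma best_set0 D phi h : best_set D 0 phi h set0.
Proof. by split=> [||T _]; rewrite ?sub0set ?cards0 // leqn0 cards_eq0 => /eqP->. Qed.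

Lemma best_set_mono D k phi psi h S : best_set D k phi h S ->
  (forall w, w \in S -> phi w <= psi w) ->
  (forall w, w \notin S -> psi w <= phi w) -> best_set D k psi h S.
Proof.
case=> sSD cS S_best le_in le_out; split=> // T sTD cT.
have gainE U : gain psi h U = gain phi h U + \sum_(w in U) (psi w - phi w).
  by rewrite /gain -addrAC -big_split /=; congr (_ - _); apply: eq_bigr => w _; lra.
have le_shift : \sum_(w in T) (psi w - phi w) <= \sum_(w in S) (psi w - phi w).
  rewrite [X in X <= _]big_mkcond [X in _ <= X]big_mkcond /=.
  apply: ler_sum => w _; case: (boolP (w \in S)) => wS; case: (w \in T) => //.
  - by rewrite subr_ge0 le_in.
  - by rewrite subr_le0 le_out.
by rewrite !gainE; have := S_best T sTD cT; lra.
Qed.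

Lemma eq_best_set D k phi psi h S :
  phi =1 psi -> best_set D k phi h S -> best_set D k psi h S.
Proof. by move=> eq_phi S_best; apply: best_set_mono S_best _ _ => w _; rewrite eq_phi. Qed.

Lemma exists_new_elem S T : (#|S| < #|T|)%N -> exists2 y, y \in T & y \notin S.
Proof. by move=> ltST; apply/subsetPn/negP => /subset_leq_card; rewrite leqNgt ltST. Qed.

Lemma best_set_swap D k psi h S T x y : best_set D k psi h S ->
  x \in S -> x \notin T -> y \in T -> y \notin S -> T \subset D -> (#|T| <= k)%N ->
  gain psi h T <= gain psi h (y |: (S :\ x)).
Proof.
case=> sSD _ S_best xS xT yT yS sTD cT.
have xTy : x \notin T :\ y by rewrite in_setD1 (negPf xT) andbF.
have ySx : y \notin S :\ x by rewrite in_setD1 (negPf yS) andbF.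
have sTD' : x |: (T :\ y) \subset D.
  by rewrite subUset sub1set (subsetP sSD) // (subset_trans (subD1set _ _) sTD).
have cT' : (#|x |: (T :\ y)| <= k)%N.
  by move: cT; rewrite cardsU1 xTy add1n (cardsD1 y T) yT.
have := S_best _ sTD' cT'.
by rewrite gain_setU1 // (gain_setD1 _ _ xS) gain_setU1 // (gain_setD1 _ _ yT); lra.
Qed.

Variables (kk : nat) (h : nat -> R).
Hypothesis h_convex : forall k, (0 < k)%N -> (k < kk)%N -> h k - h k.-1 <= h k.+1 - h k.

Lemma increment_mono j k : (j <= k)%N -> (k < kk)%N -> h j.+1 - h j <= h k.+1 - h k.
Proof.
move=> /subnK <-; elim: (k - j)%N => [|d IH] lt_kk; first by rewrite add0n.
apply: le_trans (IH _) _; first by lia.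
by rewrite addSn; apply: h_convex.
Qed.

Lemma best_set_drop D k psi S T x : (k <= kk)%N -> best_set D k psi h S ->
  x \in S -> x \notin T -> T \subset D -> (#|T| < #|S|)%N ->
  gain psi h T <= gain psi h (S :\ x).
Proof.
move=> le_kk [sSD cS S_best] xS xT sTD ltTS.
have cSx : #|S| = #|S :\ x|.+1 by rewrite (cardsD1 x S) xS.
have sTD' : x |: T \subset D by rewrite subUset sub1set (subsetP sSD) // sTD.
have cT' : (#|x |: T| <= k)%N by rewrite cardsU1 xT add1n (leq_trans ltTS).
have := S_best _ sTD' cT'; rewrite gain_setU1 // (gain_setD1 _ _ xS).
have : h #|T|.+1 - h #|T| <= h #|S :\ x|.+1 - h #|S :\ x|.
  by apply: increment_mono; move: ltTS cS; rewrite cSx; lia.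
lra.
Qed.

Lemma best_set_lower D k psi phi S x : (k <= kk)%N ->
  best_set D k psi h S -> x \in S -> (forall w, w != x -> phi w = psi w) ->
  ~ best_set D k phi h S ->
  best_set D k phi h (S :\ x) \/
  exists2 y, y \notin S & best_set D k phi h (y |: (S :\ x)) /\ phi x < phi y.
Proof.
move=> le_kk S_best xS phi_psi not_best; have [sSD cS S_max] := S_best.
have [T [sTD cT T_max]] := best_set_exists D k phi h.
have gain_off U : x \notin U -> gain phi h U = gain psi h U.
  by move=> xU; apply: eq_in_gain => w wU; apply: phi_psi; apply: contraNneq xU => <-.
have gain_on U : x \in U -> gain phi h U = gain psi h U + (phi x - psi x).
  by move=> xU; rewrite !(gain_setD1 _ _ xU) gain_off ?setD11 //; lra.
have lt_ST : gain phi h S < gain phi h T.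
  rewrite ltNge; apply/negP => le_TS; apply: not_best; split=> // U sUD cU.
  exact: le_trans (T_max U sUD cU) le_TS.
have xT : x \notin T.
  by apply/negP => xT; move: lt_ST; rewrite !gain_on //; have := S_max T sTD cT; lra.
have best_above U : U \subset D -> (#|U| <= k)%N -> x \notin U ->
    gain psi h T <= gain psi h U -> best_set D k phi h U.
  move=> sUD cU xU le_TU; split=> // V sVD cV.
  by rewrite (gain_off U) //; apply: le_trans (T_max V sVD cV) _; rewrite gain_off.
have sSxD : S :\ x \subset D by apply: subset_trans sSD; apply: subD1set.
have xSx : x \notin S :\ x by rewrite setD11.
have cSx : #|S| = #|S :\ x|.+1 by rewrite (cardsD1 x S) xS.
case: (ltnP #|T| #|S|) => [ltTS|leST].
  left; apply: best_above => //.
    by apply: leq_trans cS; rewrite cSx.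
  exact: (best_set_drop le_kk S_best xS xT sTD ltTS).
have [y yT ySx] : exists2 y, y \in T & y \notin S :\ x.
  by apply: exists_new_elem; rewrite -ltnS -cSx.
have yS : y \notin S.
  by apply: contraNN ySx => yS; rewrite in_setD1 yS andbT; apply: contraNneq xT => <-.
have best_y : best_set D k phi h (y |: (S :\ x)).
  apply: best_above; last exact: (best_set_swap S_best xS xT yT yS sTD cT).
  - by rewrite subUset sub1set (subsetP sTD).
  - by rewrite cardsU1 ySx add1n -cSx.
  - by rewrite in_setU1 negb_or xSx andbT; apply: contraNneq xT => ->.
right; exists y => //; split=> //; have [_ _ y_max] := best_y.
have := lt_le_trans lt_ST (y_max T sTD cT).
by rewrite (gain_setD1 _ _ xS) gain_setU1 //; lra.
Qed.

Lemma best_set_capS D k psi S : (k < kk)%N -> best_set D k psi h S ->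
  best_set D k.+1 psi h S \/ exists2 y, y \notin S & best_set D k.+1 psi h (y |: S).
Proof.
move=> lt_kk [sSD cS S_max].
have [T [sTD cT T_max]] := best_set_exists D k.+1 psi h.
case: (leqP #|T| k) => [leTk|ltkT].
  left; split=> [||U sUD cU] //; first exact: leqW.
  exact: le_trans (T_max U sUD cU) (S_max T sTD leTk).
have [y yT yS] := exists_new_elem (leq_ltn_trans cS ltkT).
have cTy : #|T| = #|T :\ y|.+1 by rewrite (cardsD1 y T) yT.
right; exists y => //; split=> [||U sUD cU].
- by rewrite subUset sub1set (subsetP sTD).
- by rewrite cardsU1 yS.
apply: le_trans (T_max U sUD cU) _.
have cTyk : #|T :\ y| = k by move: cT ltkT; rewrite cTy; lia.
have := S_max (T :\ y) (subset_trans (subD1set _ _) sTD) (eq_leq cTyk).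
have : h #|S|.+1 - h #|S| <= h #|T :\ y|.+1 - h #|T :\ y|.
  by apply: increment_mono; rewrite cTyk.
by rewrite (gain_setD1 _ _ yT) gain_setU1 //; lra.
Qed.
End BestSet.

Lemma card_above_ltn (d : Order.disp_t) (X : porderType d) (T : finType) (F : T -> X) t u :
  (F t < F u)%O -> (#|[set z | F u < F z]%O| < #|[set z | F t < F z]%O|)%N.
Proof.
move=> lt_tu; apply: proper_card; apply/properP; split.
  by apply/subsetP => z; rewrite !inE => /(lt_trans lt_tu).
by exists u; rewrite !inE ?ltxx.
Qed.

Section CongestionGame.
Variables (R : realFieldType) (W A : finType).
Variables (D : A -> {set W}) (Kmax : A -> nat).
Variables (g : A -> nat -> R) (f : A -> W -> nat -> R).
Hypothesis g_convex : forall a k, (0 < k)%N -> (k < Kmax a)%N ->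
  g a k - g a k.-1 <= g a k.+1 - g a k.
Hypothesis f_decr : forall a w m, f a w m.+1 <= f a w m.

Local Notation play := {ffun A -> {set W}}.
Implicit Types (s : play) (kap : A -> nat) (L : W -> nat) (S T : {set W}).

Lemma f_le a w k m : (k <= m)%N -> f a w m <= f a w k.
Proof.
move/subnK <-; elim: (m - k)%N => [|d IH]; first by rewrite add0n.
by rewrite addSn; apply: le_trans (f_decr _ _ _) IH.
Qed.

Definition load s w := (\sum_a (w \in s a))%N.
Definition load_other s a w := (\sum_(b | b != a) (w \in s b))%N.
Definition worth s a w := f a w (load_other s a w).+1.
Definition equilibrium kap s :=
  forall a, best_set (D a) (kap a) (worth s a) (g a) (s a).

Definition frozen_worth L a S w := f a w (L w + (w \notin S)).
Definition frozen_best kap L s :=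
  forall a, best_set (D a) (kap a) (frozen_worth L a (s a)) (g a) (s a).
Definition excess_at L (x : option W) s :=
  forall w, load s w = (L w + (Some w == x))%N.
Definition potential L s := \sum_a \sum_(w in s a) f a w (L w).+1.
Definition upd s a T : play := [ffun b => if b == a then T else s b].

Lemma excess_at_some L x s :
  excess_at L (Some x) s <-> forall w, load s w = (L w + (w == x))%N.
Proof. by split=> Es w; rewrite Es (inj_eq Some_inj). Qed.

Lemma load_split s a w : load s w = ((w \in s a) + load_other s a w)%N.
Proof. by rewrite /load (bigD1 a). Qed.

Lemma worth_load s a w : worth s a w = f a w (load s w + (w \notin s a)).
Proof.
by rewrite /worth (load_split s a w); case: (w \in s a); rewrite /= ?add1n ?addn1 ?addn0.
Qed.

Lemma upd_same s a T : upd s a T a = T.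
Proof. by rewrite ffunE eqxx. Qed.

Lemma upd_other s a T b : b != a -> upd s a T b = s b.
Proof. by rewrite ffunE => /negPf->. Qed.

Lemma load_upd s a T w : (load (upd s a T) w + (w \in s a) = load s w + (w \in T))%N.
Proof.
rewrite !(load_split _ a) upd_same.
have -> : load_other (upd s a T) a w = load_other s a w.
  by apply: eq_bigr => b ba; rewrite upd_other.
lia.
Qed.

Lemma potential_upd L s a T :
  potential L (upd s a T) + \sum_(w in s a) f a w (L w).+1 =
  potential L s + \sum_(w in T) f a w (L w).+1.
Proof.
rewrite /potential (bigD1 a) //= [in RHS](bigD1 a) //= upd_same.
rewrite (eq_bigr (fun b => \sum_(w in s b) f b w (L w).+1)) => [|b ba]; first lra.
by rewrite upd_other.
Qed.

Lemma frozen_best_upd kap L s a T :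
  (forall b, b != a -> best_set (D b) (kap b) (frozen_worth L b (s b)) (g b) (s b)) ->
  best_set (D a) (kap a) (frozen_worth L a T) (g a) T ->
  frozen_best kap L (upd s a T).
Proof.
move=> other_best a_best b; case: (eqVneq b a) => [->|ba]; first by rewrite upd_same.
by rewrite upd_other //; apply: other_best.
Qed.

Lemma frozen_best_load kap s : equilibrium kap s -> frozen_best kap (load s) s.
Proof. by move=> Es a; apply: eq_best_set (Es a) => w; rewrite worth_load. Qed.

Lemma equilibrium_frozen kap L s :
  frozen_best kap L s -> excess_at L None s -> equilibrium kap s.
Proof. by move=> Fs Es a; apply: eq_best_set (Fs a) => w; rewrite worth_load Es addn0. Qed.

Lemma worth_excess L x s : excess_at L (Some x) s ->
  forall a w, worth s a w = f a w (L w + (w == x) + (w \notin s a)).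
Proof. by move=> Es a w; rewrite worth_load Es. Qed.

Lemma best_set_excess_notin kap L s x a :
  frozen_best kap L s -> excess_at L (Some x) s -> x \notin s a ->
  best_set (D a) (kap a) (worth s a) (g a) (s a).
Proof.
move=> Fs Es xa; apply: best_set_mono (Fs a) _ _ => w wa;
  rewrite (worth_excess Es) /frozen_worth wa; apply: f_le; last by lia.
have /negPf-> : w != x by apply: contraNneq xa => <-.
by rewrite addn0.
Qed.

Lemma excess_step kap L s x b : (kap b <= Kmax b)%N ->
  frozen_best kap L s -> excess_at L (Some x) s ->
  ~ best_set (D b) (kap b) (worth s b) (g b) (s b) ->
  (exists s', frozen_best kap L s' /\ excess_at L None s') \/
  exists s' y, [/\ frozen_best kap L s', excess_at L (Some y) s'
                 & potential L s < potential L s'].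
Proof.
move=> cap_b Fs Es not_best; have /excess_at_some Ex := Es.
have xb : x \in s b.
  by apply: contraT => xb; case: not_best; apply: best_set_excess_notin Fs Es xb.
have worth_off w : w != x -> worth s b w = frozen_worth L b (s b) w.
  by move=> wx; rewrite (worth_excess Es) (negPf wx) addn0.
have Fs_other b' : b' != b ->
    best_set (D b') (kap b') (frozen_worth L b' (s b')) (g b') (s b') by [].
have [drop_best|[y yb [swap_best lt_xy]]] :=
  best_set_lower (@g_convex b) cap_b (Fs b) xb worth_off not_best.
  left; exists (upd s b (s b :\ x)); split.
    apply: frozen_best_upd Fs_other _; apply: eq_best_set drop_best => w.
    rewrite (worth_excess Es) /frozen_worth in_setD1.
    by case: (eqVneq w x) => [->|_]; rewrite ?xb /= ?addn0 ?addn1.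
  move=> w; have := load_upd s b (s b :\ x) w; rewrite Ex in_setD1.
  by case: (eqVneq w x) => [->|_]; rewrite ?xb /=; lia.
have yx : y != x by apply: contraNneq yb => ->.
have ybx : y \notin s b :\ x by rewrite in_setD1 (negPf yb) andbF.
set T := y |: (s b :\ x).
have memT w : w \in T = (w == y) || (w != x) && (w \in s b) by rewrite !inE.
have worth_T w : worth s b w = f b w (L w + (w \notin T) + (w == y)).
  rewrite (worth_excess Es) memT; case: (eqVneq w y) => [->|wy].
    by rewrite (negPf yx) (negPf yb).
  by case: (eqVneq w x) => [->|wx]; rewrite ?xb /= ?addn0.
right; exists (upd s b T), y; split.
- apply: frozen_best_upd Fs_other _; apply: best_set_mono swap_best _ _ => w wT;
    rewrite worth_T /frozen_worth wT; apply: f_le; first by lia.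
  have /negPf-> : w != y by apply: contraNneq wT => ->; rewrite memT eqxx.
  by rewrite addn0.
- apply/excess_at_some => w; have := load_upd s b T w; rewrite Ex memT.
  case: (eqVneq w y) => [->|wy] /=; first by rewrite (negPf yx) (negPf yb); lia.
  by case: (eqVneq w x) => [->|wx] /=; rewrite ?xb; lia.
have := potential_upd L s b T; rewrite big_setU1 // (big_setD1 _ xb) /=.
move: lt_xy; rewrite !(worth_excess Es) eqxx xb (negPf yx) (negPf yb) /=.
by rewrite !addn0 !addn1; lra.
Qed.

Lemma frozen_best_equilibrium kap L s x : (forall a, kap a <= Kmax a)%N ->
  frozen_best kap L s -> excess_at L x s -> exists s', equilibrium kap s'.
Proof.
move=> capK; pose above t := #|[set t' : play | potential L t < potential L t']|.
have [N] := ubnP (above s); elim: N s x => // N IH s [x|] lt_N Fs Es; last first.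
  by exists s; apply: equilibrium_frozen Es.
have [|/not_all_ex_not[b not_best]] := classic (equilibrium kap s); first by exists s.
have [[s' [Fs' Es']]|[s' [y [Fs' Es' lt_pot]]]] := excess_step (capK b) Fs Es not_best.
  by exists s'; apply: equilibrium_frozen Es'.
apply: IH Fs' Es'; rewrite -ltnS; apply: leq_trans lt_N; rewrite ltnS.
exact: card_above_ltn.
Qed.

Definition raise_cap kap a b := (kap b + (b == a))%N.

Lemma equilibrium_raise kap a s : (forall b, raise_cap kap a b <= Kmax b)%N ->
  equilibrium kap s -> exists s', equilibrium (raise_cap kap a) s'.
Proof.
move=> capK Es; have Fs := frozen_best_load Es.
have cap_a : raise_cap kap a a = (kap a).+1 by rewrite /raise_cap eqxx addn1.
have Fs_other b : b != a -> best_set (D b) (raise_cap kap a b)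
    (frozen_worth (load s) b (s b)) (g b) (s b).
  by move=> ba; rewrite /raise_cap (negPf ba) addn0.
have lt_cap : (kap a < Kmax a)%N by rewrite -cap_a capK.
have [a_best|[y ya ya_best]] := best_set_capS (@g_convex a) lt_cap (Fs a).
  apply: (@frozen_best_equilibrium _ (load s) s None capK) => [b|w].
    by case: (eqVneq b a) => [->|ba]; [rewrite cap_a | apply: Fs_other].
  by rewrite addn0.
apply: (@frozen_best_equilibrium _ (load s) (upd s a (y |: s a)) (Some y) capK).
  apply: frozen_best_upd Fs_other _; rewrite cap_a.
  apply: best_set_mono ya_best _ _ => w; rewrite /frozen_worth in_setU1 => wT; apply: f_le.
    by lia.
  by move: wT; case: (eqVneq w y) => //= _ ->.
apply/excess_at_some => w; have := load_upd s a (y |: s a) w; rewrite in_setU1.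
by case: (eqVneq w y) => [->|_] /=; rewrite ?(negPf ya); lia.
Qed.

Theorem equilibrium_exists kap : (forall a, kap a <= Kmax a)%N ->
  exists s, equilibrium kap s.
Proof.
have [N] := ubnP (\sum_a kap a)%N; elim: N kap => // N IH kap lt_N capK.
case: (pickP (fun a => 0 < kap a)%N) => [a kap_a|kap0]; last first.
  exists [ffun => set0] => a; rewrite ffunE.
  by move/negbT: (kap0 a); rewrite -leqNgt leqn0 => /eqP->; apply: best_set0.
pose kap' b := (kap b - (b == a))%N.
have raise_kap' : raise_cap kap' a =1 kap.
  by move=> b; rewrite /raise_cap /kap'; case: (eqVneq b a) => [->|_]; lia.
have lt_sum : (\sum_b kap' b < \sum_b kap b)%N.
  rewrite [ltnRHS](bigD1 a) //= (bigD1 a) //= (eq_bigr kap) => [|b /negPf ba].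
    by rewrite /kap' eqxx; lia.
  by rewrite /kap' ba subn0.
have [s Es] := IH kap' (leq_trans lt_sum lt_N) (fun b => leq_trans (leq_subr _ _) (capK b)).
have [s' Es'] :=
  equilibrium_raise (fun b => leq_trans (eq_leq (raise_kap' b)) (capK b)) Es.
by exists s' => b; rewrite -raise_kap'; apply: Es'.
Qed.
End CongestionGame.

Section SearchGameAgents.
Variables (R : realFieldType) (n : nat) (Omega : finType).
Variables (P : 'I_n -> {set {set Omega}}) (mu : Omega -> R) (K : 'I_n -> nat).
Variables (c : 'I_n -> nat -> R) (v : 'I_n -> nat -> Omega -> R).
Hypothesis P_partition : forall i, partition (P i) [set: Omega].
Hypothesis mu_ge0 : forall w, 0 <= mu w.
Hypothesis c_convex : forall i k, (0 < k)%N -> (k < K i)%N ->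
  c i k - c i k.-1 <= c i k.+1 - c i k.
Hypothesis v_decr : forall i m w, (0 < m)%N -> (m < n)%N -> v i m.+1 w <= v i m w.

Local Notation agent := ('I_n * {set Omega})%type.
Local Notation agent_play := {ffun agent -> {set Omega}}.

Definition cell_dom (a : agent) := if a.2 \in P a.1 then a.2 else set0.
Definition cell_cost (a : agent) k := (\sum_(w in a.2) mu w) * c a.1 k.
(* [v i] is only constrained for loads in [1, n]; clamping the load extends it to a
   nonincreasing function of every load. *)
Definition cell_reward (a : agent) w m := mu w * v a.1 (maxn 1 (minn m n)) w.
Definition profile_of (sg : agent_play) : profile n Omega := fun i C => sg (i, C).

Lemma cell_cost_convex a k : (0 < k)%N -> (k < K a.1)%N ->
  cell_cost a k - cell_cost a k.-1 <= cell_cost a k.+1 - cell_cost a k.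
Proof.
move=> k_gt0 k_lt; rewrite /cell_cost -!mulrBr.
by apply: ler_wpM2l; [apply: sumr_ge0 => w _ | apply: c_convex].
Qed.

Lemma cell_reward_decr a w m : cell_reward a w m.+1 <= cell_reward a w m.
Proof.
apply: ler_wpM2l => //.
have [[m_gt0 m_lt]|->] :
    ((0 < m)%N /\ (m < n)%N) \/ maxn 1 (minn m.+1 n) = maxn 1 (minn m n) by lia.
  have -> : maxn 1 (minn m.+1 n) = m.+1 by lia.
  have -> : maxn 1 (minn m n) = m by lia.
  exact: v_decr.
exact: lexx.
Qed.

Lemma cellE i C w : C \in P i -> w \in C -> cell P i w = C.
Proof. by move=> CP wC; apply: def_pblock => //; case/and3P: (P_partition i). Qed.

Lemma nsearch_le (s : profile n Omega) w : (nsearch P s w <= n)%N.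
Proof.
rewrite /nsearch -[n in (_ <= n)%N]card_ord -sum1_card.
by apply: leq_sum => j _; apply: leq_b1.
Qed.

Section AgentPlay.
Variable sg : agent_play.
Hypothesis sg_dom : forall a, sg a \subset cell_dom a.

Lemma mem_agent_cell j C w : w \in sg (j, C) -> cell P j w = C.
Proof.
move=> wsg; have := subsetP (sg_dom (j, C)) w wsg; rewrite /cell_dom /=.
by case: ifP => [CP wC|_]; [apply: cellE | rewrite inE].
Qed.

Lemma load_nsearch w : load sg w = nsearch P (profile_of sg) w.
Proof.
have collapse j : (\sum_C (w \in sg (j, C)))%N = (w \in sg (j, cell P j w)).
  rewrite (bigD1 (cell P j w)) //= big1 ?addn0 // => C CwC.
  by case: (boolP (w \in sg (j, C))) => // /mem_agent_cell eqC; rewrite eqC eqxx in CwC.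
rewrite /load /nsearch -(eq_bigr _ (fun j _ => collapse j)) pair_bigA /=.
by apply: eq_bigr => -[j C].
Qed.

Lemma nsearch_other (s : profile n Omega) i C w :
  (forall j C', j != i -> s j C' = sg (j, C')) ->
  C \in P i -> w \in C -> w \in s i C ->
  nsearch P s w = (load_other sg (i, C) w).+1.
Proof.
move=> s_other CP wC ws; have E := load_split sg (i, C) w.
rewrite load_nsearch /nsearch (bigD1 i) //= (cellE CP wC) in E.
rewrite /nsearch (bigD1 i) //= (cellE CP wC) ws.
rewrite (eq_bigr (fun j => nat_of_bool (w \in sg (j, cell P j w)))) => [|j ji].
  by move: E; rewrite /profile_of; lia.
by rewrite s_other.
Qed.

Lemma payoff_cells (s : profile n Omega) i :
  (forall j C, j != i -> s j C = sg (j, C)) -> admissible P K i (s i) ->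
  payoff P mu c v s i =
  \sum_(C in P i) gain (worth cell_reward sg (i, C)) (cell_cost (i, C)) (s i C).
Proof.
move=> s_other adm; have [/eqP cover_P triv_P _] := and3P (P_partition i).
rewrite /payoff (eq_bigl (fun w => w \in cover (P i))) => [|w]; last by rewrite cover_P inE.
rewrite big_trivIset //; apply: eq_bigr => C CP.
have [sub_C _] := adm C CP; set T := s i C.
rewrite (eq_bigr (fun w => mu w * ((w \in T)%:R * v i (nsearch P s w) w - c i #|T|)))
  => [|w wC]; last by rewrite (cellE CP wC).
rewrite /gain /cell_cost /=; under eq_bigr do rewrite mulrBr.
rewrite sumrB -mulr_suml; congr (_ - _).
rewrite [LHS]big_mkcond [RHS]big_mkcond; apply: eq_bigr => w _ /=.
case: (boolP (w \in T)) => wT; last by rewrite mul0r mulr0; case: (w \in C).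
have wC := subsetP sub_C w wT; have ns := nsearch_other s_other CP wC wT.
have := nsearch_le s w; rewrite wC mul1r /worth /cell_reward /= ns => le_n.
by rewrite (minn_idPl le_n) (maxn_idPr _).
Qed.
End AgentPlay.

Lemma pure_NE_profile_of (sg : agent_play) :
  equilibrium cell_dom cell_cost cell_reward (fun a => K a.1) sg ->
  pure_NE P K mu c v (profile_of sg).
Proof.
move=> Esg; have sg_dom a : sg a \subset cell_dom a by case: (Esg a).
have best_cell i C : C \in P i ->
    best_set C (K i) (worth cell_reward sg (i, C)) (cell_cost (i, C)) (sg (i, C)).
  by move=> CP; have := Esg (i, C); rewrite /cell_dom /= CP.
have adm_sg i : admissible P K i (profile_of sg i).
  by move=> C /best_cell[].
split=> // i si adm_si; set s := deviate (profile_of sg) i si.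
have s_other j C : j != i -> s j C = sg (j, C) by rewrite /s /deviate => /negPf->.
have s_i : s i = si by rewrite /s /deviate eqxx.
rewrite (payoff_cells sg_dom s_other) ?s_i // (payoff_cells sg_dom (s := profile_of sg)) //.
apply: ler_sum => C CP; have [_ _ C_max] := best_cell i C CP.
by apply: C_max; case: (adm_si C CP).
Qed.
End SearchGameAgents.

Theorem corollary1 (R : realFieldType) (n : nat) (Omega : finType)
  (P : 'I_n -> {set {set Omega}})
  (mu : Omega -> R) (K : 'I_n -> nat) (c : 'I_n -> nat -> R)
  (v : 'I_n -> nat -> Omega -> R) (vs : Omega -> R) :
  (forall i, partition (P i) [set: Omega]) ->
  (forall w, 0 <= mu w) -> \sum_(w : Omega) mu w = 1 ->
  (forall i C, C \in P i -> 0 < \sum_(w in C) mu w) ->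
  (forall i, c i 0%N = 0) ->
  (forall i k, (k <= K i)%N -> 0 <= c i k) ->
  (forall i k, (1 <= k)%N -> (k < K i)%N ->
     c i k - c i k.-1 <= c i k.+1 - c i k) ->
  (forall i m w, (1 <= m <= n)%N -> 0 <= v i m w) ->
  (forall i m w, (1 <= m)%N -> (m < n)%N -> v i m.+1 w <= v i m w) ->
  (forall w, 0 <= vs w) ->
  exists s : profile n Omega, pure_NE P K mu c v s.
Proof.
move=> P_partition mu_ge0 _ _ _ _ c_convex _ v_decr _.
have [sg Esg] := equilibrium_exists (cell_dom P) (cell_cost_convex mu_ge0 c_convex)
  (cell_reward_decr mu_ge0 v_decr) (fun a => leqnn (K a.1)).
by exists (profile_of sg); apply: pure_NE_profile_of.
Qed.
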